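(* Let $X$ be a path connected, locally path connected topological space whose first singular homology group $H_1(X;\mathbb Z)$ is trivial. Let $K\subset X$ be a closed connected set. If $X\setminus K$ is connected, then the topological boundary $\partial K$ of $K$ in $X$ is connected. *)

From HB Require Import structures.
From mathcomp Require Import all_boot all_order all_algebra.
From mathcomp Require Import all_classical all_reals all_analysis.
From mathcomp Require Import Rstruct Rstruct_topology.
From Stdlib Require Import Rdefinitions.

Set Implicit Arguments.
Unset Strict Implicit.
Unset Printing Implicit Defensive.

Import Order.TTheory GRing.Theory Num.Theory.
Local Open Scope classical_set_scope.
Local Open Scope ring_scope.

Notation RR := Rdefinitions.R.

(** The unit interval = standard 1-simplex Δ^1 (vertices 0 and 1). *)
Definition I01 : set RR := `[0%R, 1%R].

(** Standard 2-simplex Δ^2 = {(s,t) | s,t >= 0, s+t <= 1},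
    vertices e0 = (0,0), e1 = (1,0), e2 = (0,1). *)
Definition Delta2 : set (RR * RR) :=
  [set p | (0 <= p.1)%R /\ (0 <= p.2)%R /\ (p.1 + p.2 <= 1)%R].

Section Topo.
Variable X : topologicalType.

Definition is_path_in (A : set X) (f : RR -> X) (x y : X) :=
  {within I01, continuous f} /\ f 0%R = x /\ f 1%R = y /\ f @` I01 `<=` A.

Definition path_connected_set (A : set X) :=
  forall x y, A x -> A y -> exists f, is_path_in A f x y.

Definition path_connected_space := path_connected_set setT.

Definition locally_path_connected :=
  forall (x : X) (U : set X), open U -> U x ->
    exists V : set X, [/\ open V, V x, V `<=` U & path_connected_set V].

(** Singular chains with integer coefficients, as finite formal sums
    (lists of (coefficient, simplex)).  A singular 1-simplex is a map
    RR -> X continuous on Δ^1 = [0,1]; a singular 2-simplex is a map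
    RR*RR -> X continuous on Δ^2.  Two maps represent the same simplex
    iff they agree on the standard simplex. *)
Definition sing1 (s : RR -> X) := {within I01, continuous s}.
Definition sing2 (t : RR * RR -> X) := {within Delta2, continuous t}.

Definition same1 (s s' : RR -> X) := forall u, I01 u -> s u = s' u.

Definition chain1 := seq (int * (RR -> X)).
Definition chain2 := seq (int * (RR * RR -> X)).

Definition ind (P : Prop) : int := if `[< P >] then 1 else 0.

Definition coef1 (c : chain1) (s : RR -> X) : int :=
  \sum_(e <- c) e.1 * ind (same1 e.2 s).

(** Coefficient of the point x in the 0-chain ∂c, where ∂s = s(1) - s(0). *)
Definition bd1_coef (c : chain1) (x : X) : int :=
  \sum_(e <- c) e.1 * (ind (e.2 1%R = x) - ind (e.2 0%R = x)).

(** Faces of a 2-simplex: d_i t is the restriction to the face opposite e_i,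
    via the order preserving affine identification with Δ^1. *)
Definition face0 (t : RR * RR -> X) : RR -> X := fun u => t (1 - u, u)%R.
Definition face1 (t : RR * RR -> X) : RR -> X := fun u => t (0, u)%R.
Definition face2 (t : RR * RR -> X) : RR -> X := fun u => t (u, 0)%R.

(** Coefficient of s in ∂d, where ∂t = d0 t - d1 t + d2 t. *)
Definition bd2_coef (d : chain2) (s : RR -> X) : int :=
  \sum_(e <- d) e.1 * (ind (same1 (face0 e.2) s) - ind (same1 (face1 e.2) s)
                       + ind (same1 (face2 e.2) s)).

Definition is_cycle1 (c : chain1) := forall x, bd1_coef c x = 0.

Definition H1_trivial :=
  forall c : chain1, (forall e, e \in c -> sing1 e.2) -> is_cycle1 c ->
    exists d : chain2, (forall e, e \in d -> sing2 e.2) /\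
      forall s, sing1 s -> coef1 c s = bd2_coef d s.

Definition boundary (K : set X) : set X := closure K `\` interior K.

End Topo.

From Pilot Require Import Defs.
From mathcomp Require Import all_boot all_order all_algebra.
From mathcomp Require Import all_classical all_reals all_analysis.
From mathcomp Require Import Rstruct Rstruct_topology.
From mathcomp Require Import ring lra.
Set Implicit Arguments.
Unset Strict Implicit.
Unset Printing Implicit Defensive.

Import Order.TTheory GRing.Theory Num.Theory.
Import numFieldNormedType.Exports.
Local Open Scope classical_set_scope.
Local Open Scope ring_scope.

(** If the
    boundary of K were not connected, it would split into two disjoint nonempty
    closed pieces A and B.

    We then build an integer "crossing number" for paths.  Paths avoiding B are
    measured by the increment of a label [labelA] that tells apart the interior
    of K, the exterior of K and A; paths avoiding A by a similar label
    [labelB].  A general path is cut into such small pieces and the increments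
    are summed; this is independent of the (fine enough) subdivision.  Cutting
    the square of paths underlying a singular 2-simplex into small cells (a
    Lebesgue number argument) shows that the crossing number vanishes on the
    boundary of every singular 2-simplex; as H_1(X) = 0 it then vanishes on
    every 1-cycle, so crossing numbers add up along triangles of paths.
    Integrating along paths from a base point gives a potential on X that
    follows [labelA] off B and [labelB] off A.  The potential corrected by the
    labels is locally constant, hence constant on the connected sets K and
    closure (X \ K); comparing a point of A with a point of B along both sets
    gives 4 = 0. *)

Lemma within_continuous_comp_within {S T Y : topologicalType} (A : set T)
  (B : set S) (f : T -> Y) (g : S -> T) :
  {within A, continuous f} -> {within B, continuous g} -> g @` B `<=` A ->
  {within B, continuous (f \o g)}.
Proof.
move=> /subspace_continuousP cf /subspace_continuousP cg gBA.
apply/(@subspace_continuousP _ B _ (f \o g)) => x Bx U /= nU.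
have Agx : A (g x) by apply: gBA; exists x.
have /= := cg _ Bx _ (cf _ Agx U nU); rewrite !nbhs_simpl /= /within /=.
by apply: filterS => y /= H By; apply: H => //; apply: gBA; exists y.
Qed.

Lemma within_continuous_ball {T : pseudoMetricType RR} {Y : topologicalType}
  {D : set T} {f : T -> Y} {x U} :
  {within D, continuous f} -> D x -> open U -> U (f x) ->
  exists2 e : RR, 0 < e & forall y, D y -> ball x e y -> U (f y).
Proof.
move=> /subspace_continuousP cf Dx oU Ufx.
have /nbhs_ballP [e e0 He] := cf x Dx U (open_nbhs_nbhs (conj oU Ufx)).
by exists e => // y Dy /He; apply.
Qed.

Lemma open_disjoint_separated {T : topologicalType} (U V : set T) :
  open U -> open V -> U `&` V = set0 -> separated U V.
Proof.
move=> oU oV UV; split; apply/eqP; apply/eqP; rewrite -subset0.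
- move=> x [clUx Vx]; have [y [Uy Vy]] := clUx V (open_nbhs_nbhs (conj oV Vx)).
  by have : (U `&` V) y by []; rewrite UV.
- move=> x [Ux clVx]; have [y [Vy Uy]] := clVx U (open_nbhs_nbhs (conj oU Ux)).
  by have : (U `&` V) y by []; rewrite UV.
Qed.

Lemma locally_constant_connected {T : topologicalType} {Z : Type}
  (S : set T) (h : T -> Z) : connected S ->
  (forall x, S x -> exists2 W, open W /\ W x & forall y, S y -> W y -> h y = h x) ->
  forall x y, S x -> S y -> h x = h y.
Proof.
move=> cS lc x y Sx Sy.
pose E := [set z | S z /\ h z = h x].
pose U := \bigcup_(W in [set W | open W /\ exists z, E z /\ W z /\
   (forall y, S y -> W y -> h y = h z)]) W.
pose V := \bigcup_(W in [set W | open W /\ exists z, S z /\ h z <> h x /\ W z /\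
   (forall y, S y -> W y -> h y = h z)]) W.
have ES : E = S.
  apply: cS; first by exists x.
  - exists U; first by apply: bigcup_open => W [].
    apply/seteqP; split => [z [Sz hz]|w [Sw [W [_ [z [[_ hz] [_ HW]]]] Ww]]].
      by have [W [oW Wz] HW] := lc z Sz; split => //; exists W => //; split => //; exists z.
    by split => //; rewrite (HW w Sw Ww).
  - exists (~` V); first by apply: open_closedC; apply: bigcup_open => W [].
    apply/seteqP; split => [z [Sz hz]|w [Sw nVw]].
      split => // -[W [_ [z' [_ [hz' [_ HW]]]]] Wz].
      by apply: hz'; rewrite -(HW z Sz Wz).
    split => //; apply: contrapT => hw; apply: nVw.
    by have [W [oW Ww] HW] := lc w Sw; exists W => //; split => //; exists w.
by have [] : E y by rewrite ES.
Qed.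

Lemma boundary_closed {T : topologicalType} (K : set T) : closed (boundary K).
Proof. by apply: closedI; [exact: closed_closure|exact: open_closedC (open_interior K)]. Qed.

Lemma boundary_closedE {T : topologicalType} (K : set T) :
  closed K -> boundary K = K `\` K°.
Proof. by move=> cK; rewrite /boundary -(proj1 (closure_id K) cK). Qed.

Definition seg (u v : RR) : set RR := [set` `[u, v]].

Lemma segP u v x : seg u v x <-> u <= x <= v.
Proof. by rewrite /seg /= in_itv. Qed.

Lemma segl u v : u <= v -> seg u v u.
Proof. by move=> uv; apply/segP; rewrite lexx uv. Qed.

Lemma segr u v : u <= v -> seg u v v.
Proof. by move=> uv; apply/segP; rewrite lexx uv. Qed.

Lemma I01P x : I01 x <-> 0 <= x <= 1.
Proof. by rewrite /I01 /= in_itv. Qed.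

Lemma is_path_inP {X : topologicalType} (S : set X) f x y :
  is_path_in S f x y -> [/\ sing1 f, f 0 = x, f 1 = y & f @` I01 `<=` S].
Proof. by case=> cf [f0 [f1 fS]]. Qed.

Lemma seg_sub {u v} : 0 <= u -> v <= 1 -> seg u v `<=` I01.
Proof. move=> u0 v1 x /segP /andP [ux xv]; apply/I01P; apply/andP; split; lra. Qed.

Definition grid (N k : nat) : RR := k%:R / N%:R.

Lemma grid_ge0 N k : 0 <= grid N k.
Proof. by rewrite /grid divr_ge0 // ler0n. Qed.

Lemma grid_le {N a b} : (a <= b)%N -> grid N a <= grid N b.
Proof. by move=> ab; rewrite /grid ler_wpM2r // ?invr_ge0 ?ler0n // ler_nat. Qed.

Lemma grid0 N : grid N 0 = 0.
Proof. by rewrite /grid mul0r. Qed.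

Lemma gridN {N} : (0 < N)%N -> grid N N = 1.
Proof. by move=> N0; rewrite /grid divff // pnatr_eq0 -lt0n. Qed.

Lemma grid_le1 {N k} : (0 < N)%N -> (k <= N)%N -> grid N k <= 1.
Proof. by move=> N0 kN; rewrite -(gridN N0) grid_le. Qed.

Lemma gridI01 {N k} : (0 < N)%N -> (k <= N)%N -> I01 (grid N k).
Proof. by move=> N0 kN; apply/I01P; rewrite grid_ge0 grid_le1. Qed.

Lemma gridS N k : grid N k.+1 = grid N k + N%:R^-1.
Proof. by rewrite /grid -natr1 mulrDl mul1r. Qed.

Lemma grid_mul {N M} k : (0 < N)%N -> (0 < M)%N -> grid (N * M) (k * M) = grid N k.
Proof.
move=> N0 M0; rewrite /grid !natrM; field.
by apply/andP; split; rewrite pnatr_eq0 -lt0n.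
Qed.

Lemma grid_in_cell {N i} : (0 < N)%N -> (i <= N)%N ->
  exists2 i', (i' < N)%N & seg (grid N i') (grid N i'.+1) (grid N i).
Proof.
move=> N0 iN; have [ilt|ige] := ltnP i N.
  by exists i => //; apply: segl; rewrite grid_le.
exists N.-1; first by rewrite prednK ?leqnn // ltnW.
have -> : i = N by apply/eqP; rewrite eqn_leq iN ige.
by rewrite prednK //; apply: segr; rewrite grid_le // leq_pred.
Qed.

Lemma big_nat_blocks (V : zmodType) (F : nat -> V) N M :
  \sum_(0 <= j < N * M) F j = \sum_(0 <= k < N) \sum_(0 <= m < M) F (k * M + m)%N.
Proof.
elim: N => [|N IH]; first by rewrite mul0n !big_geq.
rewrite big_nat_recr //= -IH mulSn addnC (big_cat_nat _ (leq_addr M (N * M))) //=.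
congr (_ + _); rewrite -{1}(add0n (N * M)%N) big_addn addKn.
by apply: eq_bigr => i _; rewrite addnC.
Qed.

(** * Singular 2-simplices seen as squares of paths *)

Definition square : set (RR * RR) := [set z | I01 z.1 /\ I01 z.2].

Definition cell N k i : set (RR * RR) :=
  [set z | seg (grid N k) (grid N k.+1) z.1 /\ seg (grid N i) (grid N i.+1) z.2].

Definition box N (z : RR * RR) : set (RR * RR) :=
  [set w | square w /\ (z.1 <= w.1 <= z.1 + N%:R^-1) /\ (z.2 <= w.2 <= z.2 + N%:R^-1)].

Lemma square_compact : compact square.
Proof. exact: (compact_setX (@segment_compact _ 0 1) (@segment_compact _ 0 1)). Qed.

Lemma box_ball (z z' : RR * RR) (e : RR) N : ball z (e / 2) z' -> N%:R^-1 < e / 2 ->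
  box N z' `<=` ball z e.
Proof.
case: z z' => a b [a' b'] bz Ne [c d] [_ [/andP [c1 c2] /andP [d1 d2]]] /=.
move: bz; rewrite /ball /= /prod_ball /= /ball /= => -[h1 h2].
rewrite !ltr_norml in h1 h2 *; move: h1 h2 => /andP [h1 h1'] /andP [h2 h2'].
by rewrite /= in c1 c2 d1 d2; split; apply/andP; split; lra.
Qed.

(** The square is mapped onto Δ^2 by (a, b) |-> (a(1-b), ab), collapsing the
    edge a = 0 to the vertex e0; the rows b = 0 and b = 1 go to the faces d2
    and d1, the column a = 1 to the face d0. *)
Definition collapse (z : RR * RR) : RR * RR := (z.1 * (1 - z.2), z.1 * z.2).

Lemma collapse_continuous : continuous collapse.
Proof.
move=> z; have c1 : {for z, continuous (fun z : RR * RR => z.1)} by exact: cvg_fst.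
have c2 : {for z, continuous (fun z : RR * RR => z.2)} by exact: cvg_snd.
have c3 : {for z, continuous (fun z : RR * RR => z.1 * (1 - z.2))}.
  by apply: continuousM c1 _; apply: cvgB; [exact: cvg_cst|exact: c2].
exact: cvg_pair c3 (continuousM c1 c2).
Qed.

Lemma collapse_square : collapse @` square `<=` Delta2.
Proof.
move=> _ [[a b] [/I01P /andP [a0 a1] /I01P /andP [b0 b1]] <-] /=.
split; [apply/RleP|split; apply/RleP].
- by apply: mulr_ge0 => //; rewrite subr_ge0.
- exact: mulr_ge0.
- by change (a * (1 - b) + a * b <= 1); rewrite -mulrDr subrK mulr1.
Qed.

Section SimplexSquare.
Variable X : topologicalType.

Definition row_path (t : RR * RR -> X) c : RR -> X := fun s => t (collapse (s, c)).
Definition col_path (t : RR * RR -> X) c : RR -> X := fun r => t (collapse (c, r)).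

Variable t : RR * RR -> X.
Hypothesis ct : sing2 t.

Lemma collapse_sing : {within square, continuous (t \o collapse)}.
Proof.
apply: within_continuous_comp_within ct _ collapse_square.
exact: continuous_subspaceT collapse_continuous.
Qed.

Lemma row_path_sing c : I01 c -> sing1 (row_path t c).
Proof.
move=> Ic; apply: (@within_continuous_comp_within _ _ _ _ _ _ (fun s => (s, c))
  collapse_sing) => [|_ [s Is <-]] //.
by apply: continuous_subspaceT => s; exact: (cvg_pair cvg_id (cvg_cst c)).
Qed.

Lemma col_path_sing c : I01 c -> sing1 (col_path t c).
Proof.
move=> Ic; apply: (@within_continuous_comp_within _ _ _ _ _ _ (fun s => (c, s))
  collapse_sing) => [|_ [s Is <-]] //.
by apply: continuous_subspaceT => s; exact: (cvg_pair (cvg_cst c) cvg_id).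
Qed.

(** The faces of a singular 2-simplex are singular 1-simplices: d0 is the
    column a = 1, d1 and d2 the rows b = 1 and b = 0 of the square. *)
Lemma face_sing : [/\ sing1 (face0 t), sing1 (face1 t) & sing1 (face2 t)].
Proof.
have [I0 I1] : I01 0 /\ I01 1 by split; apply/I01P; rewrite lexx ler01.
split.
- apply: (@subspace_eq_continuous _ I01 _ (col_path t 1)); last exact: col_path_sing.
  by move=> u _; rewrite /col_path /collapse /face0 /= !mul1r.
- apply: (@subspace_eq_continuous _ I01 _ (row_path t 1)); last exact: row_path_sing.
  by move=> u _; rewrite /row_path /collapse /face1 /= subrr mulr0 mulr1.
- apply: (@subspace_eq_continuous _ I01 _ (row_path t 0)); last exact: row_path_sing.
  by move=> u _; rewrite /row_path /collapse /face2 /= subr0 mulr0 mulr1.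
Qed.

End SimplexSquare.

(** * The crossing number of a path

    For paths
    avoiding B we measure progress with [labelA], for paths avoiding A with
    [labelB]; both labels tell apart the interior of K, the exterior of K and
    the relevant part of the boundary. *)
Section Crossing.
Variables (X : topologicalType) (K A B : set X).
Hypothesis cK : closed K.
Hypothesis bdK_AB : forall x, K x -> ~ K° x -> A x \/ B x.

Definition labelA (x : X) : int :=
  if `[< K x >] then (if `[< A x >] then 1 else 0) else 2.
Definition labelB (x : X) : int :=
  if `[< K x >] then (if `[< B x >] then 3 else 4) else 2.

Definition small (S : set X) := S `<=` ~` B \/ S `<=` ~` A.

Definition arc (s : RR -> X) u v := s @` seg u v.

Definition step (s : RR -> X) u v : int :=
  if `[< arc s u v `<=` ~` B >] then labelA (s v) - labelA (s u)
  else labelB (s v) - labelB (s u).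

Lemma arc_connected {s u v} : sing1 s -> 0 <= u -> v <= 1 -> connected (arc s u v).
Proof.
move=> cs u0 v1; apply: connected_continuous_connected.
  exact/connected_intervalP/interval_is_interval.
by apply: (continuous_subspaceW _ cs); exact: seg_sub.
Qed.

Lemma arc_sub {s u v u' v'} : u <= u' -> v' <= v -> arc s u' v' `<=` arc s u v.
Proof.
move=> uu vv y [x /segP /andP [h1 h2] <-]; exists x => //.
by apply/segP/andP; split; [exact: le_trans h1|exact: le_trans vv].
Qed.

Lemma arc_l {s u v} : u <= v -> arc s u v (s u).
Proof. by move=> uv; exists u => //; exact: segl. Qed.

Lemma arc_r {s u v} : u <= v -> arc s u v (s v).
Proof. by move=> uv; exists v => //; exact: segr. Qed.

Lemma stepA s u v : arc s u v `<=` ~` B -> step s u v = labelA (s v) - labelA (s u).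
Proof. by move=> H; rewrite /step asboolT. Qed.

(** The two labels agree, up to a constant, off A and B: a connected arc missing
    both lies in the interior or in the exterior of K, where both are constant. *)
Lemma stepB s u v : sing1 s -> 0 <= u -> u <= v -> v <= 1 ->
  arc s u v `<=` ~` A -> step s u v = labelB (s v) - labelB (s u).
Proof.
move=> cs u0 uv v1 HA; rewrite /step.
have [HB|HB] := pselect (arc s u v `<=` ~` B); last by rewrite asboolF.
rewrite asboolT //.
have IE : K° `&` ~` K = set0.
  by apply/seteqP; split => // x [/interior_subset Kx nKx]; exact: nKx.
have [H|H] : arc s u v `<=` K° \/ arc s u v `<=` ~` K.
  apply: connected_subset (arc_connected cs u0 v1).
    exact: open_disjoint_separated (@open_interior _ K) (closed_openC cK) IE.
  move=> x Ix; have [Kx|nKx] := pselect (K x); last by right.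
  left; apply: contrapT => nI.
  by case: (bdK_AB Kx nI) => [/(HA _ Ix)|/(HB _ Ix)].
- have labels x : arc s u v x -> labelA x = 0 /\ labelB x = 4.
    move=> Ix; have /interior_subset Kx := H _ Ix.
    by rewrite /labelA /labelB asboolT // (asboolF (HA _ Ix)) (asboolF (HB _ Ix)).
  by have [-> ->] := labels _ (arc_r uv); have [-> ->] := labels _ (arc_l uv).
- have labels x : arc s u v x -> labelA x = 2 /\ labelB x = 2.
    by move=> Ix; rewrite /labelA /labelB !asboolF //; apply: H.
  by have [-> ->] := labels _ (arc_r uv); have [-> ->] := labels _ (arc_l uv).
Qed.

(** On a small set, the step of any arc inside it is the increment of a single
    label L: this is the local exactness of the crossing cochain. *)
Lemma small_chart {S} : small S -> exists L : X -> int, forall s u v, sing1 s ->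
  0 <= u -> u <= v -> v <= 1 -> arc s u v `<=` S -> step s u v = L (s v) - L (s u).
Proof.
case=> HS; [exists labelA|exists labelB] => s u v cs u0 uv v1 sub.
  by apply: stepA => y /sub /HS.
by apply: stepB => // y /sub /HS.
Qed.

Lemma sum_step_telescope s (q : nat -> RR) n (L : X -> int) :
  (forall k, (k < n)%N -> step s (q k) (q k.+1) = L (s (q k.+1)) - L (s (q k))) ->
  \sum_(0 <= k < n) step s (q k) (q k.+1) = L (s (q n)) - L (s (q 0%N)).
Proof.
move=> H; rewrite (eq_big_nat _ _ (F2 := fun k => L (s (q k.+1)) - L (s (q k)))).
  by rewrite telescope_sumr.
by move=> k /andP [_ kn]; apply: H.
Qed.

Definition fine s N := forall k, (k < N)%N -> small (arc s (grid N k) (grid N k.+1)).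

Definition crossing_sum s N : int := \sum_(0 <= k < N) step s (grid N k) (grid N k.+1).

Lemma crossing_sum_refine {s N M} : sing1 s -> (0 < N)%N -> (0 < M)%N ->
  fine s N -> crossing_sum s (N * M) = crossing_sum s N.
Proof.
move=> cs N0 M0 fN; rewrite /crossing_sum big_nat_blocks.
apply: eq_big_nat => k /andP [_ kN].
have [L HL] := small_chart (fN k kN).
have [u0 v1] := (grid_ge0 N k, grid_le1 N0 kN).
have uv : grid N k <= grid N k.+1 by rewrite grid_le.
rewrite HL //.
pose q m := grid (N * M) (k * M + m).
rewrite (eq_bigr (fun m => step s (q m) (q m.+1))) => [|m _]; last by rewrite /q addnS.
rewrite (sum_step_telescope (L:=L)) /q ?addn0 ?grid_mul -?mulSnr ?grid_mul //.
move=> m mM; have kMm : (k * M + m.+1 <= k.+1 * M)%N by rewrite mulSnr leq_add2l.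
apply: HL => //.
- exact: le_trans (grid_ge0 _ _) _.
- by rewrite grid_le // leq_add2l.
- have := @grid_le (N * M) _ _ kMm; rewrite grid_mul // => h; exact: le_trans h v1.
- apply: arc_sub; first by rewrite -(grid_mul k N0 M0) grid_le // leq_addr.
  by rewrite -(grid_mul k.+1 N0 M0) grid_le.
Qed.

(** The crossing number of s: the crossing sum over any fine subdivision
    (0 when there is none; by Lebesgue's lemma there always is one). *)
Definition crossing s : int :=
  xget 0 [set v | exists N, (0 < N)%N /\ fine s N /\ v = crossing_sum s N].

(** Any two fine subdivisions have a common refinement, so every fine
    subdivision computes the crossing number. *)
Lemma crossingE {s N} : sing1 s -> (0 < N)%N -> fine s N -> crossing s = crossing_sum s N.
Proof.
move=> cs N0 fN.
have [N' [N'0 [fN' ->]]] :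
    [set v | exists N, (0 < N)%N /\ fine s N /\ v = crossing_sum s N] (crossing s).
  by apply: xgetPex; exists (crossing_sum s N); exists N.
by rewrite -(crossing_sum_refine cs N'0 N0 fN') mulnC (crossing_sum_refine cs N0 N'0 fN).
Qed.

Lemma crossing_small s : sing1 s -> small (s @` I01) -> crossing s = step s 0 1.
Proof.
move=> cs sm; rewrite (@crossingE s 1) //.
  by rewrite /crossing_sum big_nat1 grid0 gridN.
by move=> k; rewrite ltnS leqn0 => /eqP ->; rewrite grid0 gridN.
Qed.

Lemma crossingA s : sing1 s -> s @` I01 `<=` ~` B ->
  crossing s = labelA (s 1) - labelA (s 0).
Proof. by move=> cs sB; rewrite crossing_small //; [apply: stepA | left]. Qed.

Lemma crossingB s : sing1 s -> s @` I01 `<=` ~` A ->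
  crossing s = labelB (s 1) - labelB (s 0).
Proof. by move=> cs sA; rewrite crossing_small //; [apply: stepB; rewrite ?ler01 | right]. Qed.

Lemma arc_ext {s s' u v} : same1 s s' -> 0 <= u -> v <= 1 -> arc s u v = arc s' u v.
Proof.
move=> E u0 v1; apply/seteqP; split => y [x Hx <-]; exists x => //;
  by rewrite (E x (seg_sub u0 v1 Hx)).
Qed.

Lemma step_ext {s s' u v} : same1 s s' -> 0 <= u -> u <= v -> v <= 1 ->
  step s u v = step s' u v.
Proof.
move=> E u0 uv v1; have Iu : I01 u by apply/I01P; rewrite u0 (le_trans uv v1).
have Iv : I01 v by apply/I01P; rewrite v1 (le_trans u0 uv).
by rewrite /step (arc_ext E u0 v1) !E.
Qed.

Lemma crossing_ext s s' : same1 s s' -> crossing s = crossing s'.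
Proof.
move=> E; rewrite /crossing; congr xget; apply/funext => v; apply/propext.
have piece N k : (k < N)%N ->
    arc s (grid N k) (grid N k.+1) = arc s' (grid N k) (grid N k.+1) /\
    step s (grid N k) (grid N k.+1) = step s' (grid N k) (grid N k.+1).
  move=> kN; have N0 : (0 < N)%N by apply: leq_ltn_trans kN.
  split; first exact: arc_ext E (grid_ge0 N k) (grid_le1 N0 kN).
  by apply: step_ext E (grid_ge0 N k) (grid_le (leqnSn k)) (grid_le1 N0 kN).
split => -[N [N0 [fN ->]]]; exists N; (split; [done|split]).
- by move=> k kN; rewrite -(proj1 (piece N k kN)); apply: fN.
- by apply: eq_big_nat => k /andP [_ kN]; rewrite (proj2 (piece N k kN)).
- by move=> k kN; rewrite (proj1 (piece N k kN)); apply: fN.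
- by apply: eq_big_nat => k /andP [_ kN]; rewrite (proj2 (piece N k kN)).
Qed.

Lemma crossing_sum_const s N c : (forall u, I01 u -> s u = c) -> crossing_sum s N = 0.
Proof.
move=> E; rewrite /crossing_sum big1_seq // => k /andP [_].
rewrite mem_index_iota => /andP [_ kN]; have N0 : (0 < N)%N by apply: leq_ltn_trans kN.
have [I0 I1] := (gridI01 N0 (ltnW kN), gridI01 N0 kN).
by rewrite /step !E //; case: ifP => _; rewrite subrr.
Qed.

(** * Crossing numbers of the faces of a singular 2-simplex

    From now on A and B are disjoint closed sets, so every point has a small
    open neighbourhood, and a Lebesgue-number argument cuts any square of
    paths into small cells. *)
Hypothesis cA : closed A.
Hypothesis cB : closed B.
Hypothesis disjAB : forall x, A x -> B x -> False.

(** Every point has a small open neighbourhood: the complement of A or of B. *)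
Lemma small_open_nbhs (y : X) : exists U, [/\ open U, U y & small U].
Proof.
have [By|nBy] := pselect (B y).
  by exists (~` A); split; [exact: closed_openC|move=> /disjAB; apply|right].
by exists (~` B); split; [exact: closed_openC| |left].
Qed.

Lemma square_lebesgue (H : RR * RR -> X) : {within square, continuous H} ->
  exists N, (0 < N)%N /\ forall k i, (k < N)%N -> (i < N)%N -> small (H @` cell N k i).
Proof.
move=> cH; pose P N z := small (H @` box N z).
have cover : \forall N \near \oo, square `<=` P N.
  apply: (proj1 (compact_near_coveringP square) square_compact nat (nbhs \oo) P).
  move=> z Sz; have [U [oU UHz smU]] := small_open_nbhs (H z).
  have [e e0 He] := within_continuous_ball cH Sz oU UHz.
  exists (ball z (e / 2), [set N | 2 / e < N%:R]).
    by split; [apply: nbhsx_ballx; rewrite divr_gt0|exact: nbhs_infty_gtr].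
  case=> z' N /= [bz NM]; have N0 : 0 < N%:R :> RR.
    by apply: lt_trans NM; rewrite divr_gt0.
  have Ne : N%:R^-1 < e / 2.
    have Ne2 : 2 < N%:R * e by rewrite -ltr_pdivrMr.
    have NV : N%:R * N%:R^-1 = 1 :> RR by rewrite mulfV // gt_eqF.
    nra.
  have sub : H @` box N z' `<=` U.
    by move=> y [w bw <-]; apply: He; [case: bw|apply: box_ball bw].
  by case: smU => smU; [left|right] => y /sub /smU.
have [N [N0 HN]] : exists N, (0 < N)%N /\ square `<=` P N.
  by have [N []] := filter_ex (filterI (nbhs_infty_gt 0%N) cover); exists N.
exists N; split => // k i kN iN.
have Sz : square (grid N k, grid N i) by split; apply: gridI01 => //; apply: ltnW.
have sub : cell N k i `<=` box N (grid N k, grid N i).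
  move=> [c d] [/segP /andP [c1 c2] /segP /andP [d1 d2]] /=.
  split; last by rewrite -!gridS c1 c2 d1 d2.
  split; apply/I01P; apply/andP; split.
  - exact: le_trans (grid_ge0 N k) c1.
  - exact: le_trans c2 (grid_le1 N0 kN).
  - exact: le_trans (grid_ge0 N i) d1.
  - exact: le_trans d2 (grid_le1 N0 iN).
by case: (HN _ Sz) => Hs; [left|right] => y [w /sub cw <-]; apply: Hs; exists w.
Qed.

Section Simplex.
Variable t : RR * RR -> X.
Hypothesis ct : sing2 t.

Variable N : nat.
Hypothesis N0 : (0 < N)%N.
Hypothesis small_cells : forall k i, (k < N)%N -> (i < N)%N ->
  small ((t \o collapse) @` cell N k i).

Lemma row_arc_cell {k i c} : seg (grid N i) (grid N i.+1) c ->
  arc (row_path t c) (grid N k) (grid N k.+1) `<=` (t \o collapse) @` cell N k i.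
Proof. by move=> ic _ [s ks <-]; exists (s, c). Qed.

Lemma col_arc_cell {k i c} : seg (grid N k) (grid N k.+1) c ->
  arc (col_path t c) (grid N i) (grid N i.+1) `<=` (t \o collapse) @` cell N k i.
Proof. by move=> kc _ [s si <-]; exists (c, s). Qed.

Lemma fine_row i : (i <= N)%N -> fine (row_path t (grid N i)) N.
Proof.
move=> iN k kN; have [i' i'N si] := grid_in_cell N0 iN.
by case: (small_cells kN i'N) => HC; [left|right] => y /(row_arc_cell si) /HC.
Qed.

Lemma fine_col k : (k <= N)%N -> fine (col_path t (grid N k)) N.
Proof.
move=> kN i iN; have [k' k'N sk] := grid_in_cell N0 kN.
by case: (small_cells k'N iN) => HC; [left|right] => y /(col_arc_cell sk) /HC.
Qed.

Let hstep i k := step (row_path t (grid N i)) (grid N k) (grid N k.+1).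
Let vstep k i := step (col_path t (grid N k)) (grid N i) (grid N i.+1).

Lemma cell_cancel k i : (k < N)%N -> (i < N)%N ->
  hstep i k + vstep k.+1 i - hstep i.+1 k - vstep k i = 0.
Proof.
move=> kN iN; have [L HL] := small_chart (small_cells kN iN).
have [lek lei] : grid N k <= grid N k.+1 /\ grid N i <= grid N i.+1 by rewrite !grid_le.
have [Ik Ik1] := (gridI01 N0 (ltnW kN), gridI01 N0 kN).
have [Ii Ii1] := (gridI01 N0 (ltnW iN), gridI01 N0 iN).
rewrite /hstep /vstep.
rewrite (HL (row_path t (grid N i))) ?grid_ge0 ?grid_le1 //;
  last exact/row_arc_cell/segl.
rewrite (HL (row_path t (grid N i.+1))) ?grid_ge0 ?grid_le1 //;
  last exact/row_arc_cell/segr.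
rewrite (HL (col_path t (grid N k))) ?grid_ge0 ?grid_le1 //;
  last exact/col_arc_cell/segl.
rewrite (HL (col_path t (grid N k.+1))) ?grid_ge0 ?grid_le1 //;
  last exact/col_arc_cell/segr.
2-5: by [exact: row_path_sing | exact: col_path_sing].
by rewrite /row_path /col_path; ring.
Qed.

(** Summing [cell_cancel] over all cells, interior edges cancel: the crossing
    sums along the four sides of the square add up to zero. *)
Lemma square_cancel :
  crossing_sum (row_path t (grid N 0)) N - crossing_sum (row_path t (grid N N)) N +
  (crossing_sum (col_path t (grid N N)) N - crossing_sum (col_path t (grid N 0)) N) = 0.
Proof.
have telescope_down (f : nat -> int) n :
    \sum_(0 <= i < n) (f i - f i.+1) = f 0%N - f n.
  by rewrite -[RHS]opprB -telescope_sumr // -sumrN; apply: eq_bigr => i _; rewrite opprB.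
have E : \sum_(0 <= i < N) \sum_(0 <= k < N)
    ((hstep i k - hstep i.+1 k) + (vstep k.+1 i - vstep k i)) = 0.
  apply: big1_seq => i /andP [_]; rewrite mem_index_iota => /andP [_ iN].
  apply: big1_seq => k /andP [_]; rewrite mem_index_iota => /andP [_ kN].
  by rewrite -[RHS](cell_cancel kN iN); ring.
move: E; under eq_bigr => i _ do rewrite big_split /=.
rewrite big_split /= exchange_big_nat /=.
under eq_bigr => k _ do rewrite telescope_down.
under [X in _ + X = 0 -> _]eq_bigr => i _ do rewrite telescope_sumr //.
by rewrite !sumrB.
Qed.

(** The faces of t are, up to reparametrization on [0,1], the sides b = 0,
    b = 1 and a = 1 of the square; the side a = 0 is constant. *)
Lemma simplex_boundary_grid :
  crossing (face0 t) - crossing (face1 t) + crossing (face2 t) = 0.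
Proof.
have row_crossing c : (c <= N)%N ->
    crossing (row_path t (grid N c)) = crossing_sum (row_path t (grid N c)) N.
  by move=> cN; apply: crossingE (row_path_sing ct (gridI01 N0 cN)) N0 (fine_row cN).
have col_crossing c : (c <= N)%N ->
    crossing (col_path t (grid N c)) = crossing_sum (col_path t (grid N c)) N.
  by move=> cN; apply: crossingE (col_path_sing ct (gridI01 N0 cN)) N0 (fine_col cN).
have -> : crossing (face2 t) = crossing_sum (row_path t (grid N 0)) N.
  rewrite -row_crossing //; apply: crossing_ext => u _.
  by rewrite /face2 /row_path /collapse /= grid0 subr0 mulr1 mulr0.
have -> : crossing (face1 t) = crossing_sum (row_path t (grid N N)) N.
  rewrite -row_crossing //; apply: crossing_ext => u _.
  by rewrite /face1 /row_path /collapse /= gridN // subrr mulr1 mulr0.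
have -> : crossing (face0 t) = crossing_sum (col_path t (grid N N)) N.
  rewrite -col_crossing //; apply: crossing_ext => u _.
  by rewrite /face0 /col_path /collapse /= gridN // !mul1r.
have side0 : crossing_sum (col_path t (grid N 0)) N = 0.
  apply: (@crossing_sum_const _ _ (t (0, 0))) => u _.
  by rewrite /col_path /collapse /= grid0 !mul0r.
by rewrite -[RHS]square_cancel side0; ring.
Qed.

End Simplex.

Lemma crossing_simplex_boundary t : sing2 t ->
  crossing (face0 t) - crossing (face1 t) + crossing (face2 t) = 0.
Proof.
move=> ct; have [N [N0 HN]] := square_lebesgue (collapse_sing ct).
exact: (@simplex_boundary_grid t ct N N0 HN).
Qed.

End Crossing.

(** * Integrating a cochain over chains

    A 1-cochain [ph], i.e. an integer function on singular 1-simplices that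
    respects [same1], pairs with 1-chains.  Since
    chains are lists with possibly repeated simplices, the proof regroups both
    pairings along a duplicate-free list of simplices. *)
Section Pairing.
Variable X : topologicalType.
Variable ph : (RR -> X) -> int.
Hypothesis ph_ext : forall s s', same1 s s' -> ph s = ph s'.

Lemma same1_sym {s s' : RR -> X} : same1 s s' -> same1 s' s.
Proof. by move=> E u Iu; rewrite E. Qed.

Lemma same1_trans {s1 s2 s3 : RR -> X} : same1 s1 s2 -> same1 s2 s3 -> same1 s1 s3.
Proof. by move=> E1 E2 u Iu; rewrite E1 // E2. Qed.

Lemma indT (P : Prop) : P -> ind P = 1.
Proof. by move=> p; rewrite /ind asboolT. Qed.

Lemma indF (P : Prop) : ~ P -> ind P = 0.
Proof. by move=> p; rewrite /ind asboolF. Qed.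

Fixpoint dedup (l : seq (RR -> X)) : seq (RR -> X) :=
  if l is x :: l' then
    (if has (fun s => `[< same1 x s >]) (dedup l') then dedup l' else x :: dedup l')
  else [::].

Lemma dedup_sub l y : y \in dedup l -> y \in l.
Proof.
elim: l => [//|x l IH] /=; case: ifP => _; first by move=> /IH yl; rewrite in_cons yl orbT.
by rewrite !in_cons => /orP [->//|/IH ->]; rewrite orbT.
Qed.

Lemma sum_dedup_pick l s : (exists2 y, y \in l & same1 s y) ->
  \sum_(r <- dedup l) ind (same1 s r) * ph r = ph s.
Proof.
elim: l => [|x l IH] /=; first by case.
move=> [y yin sy].
case Hh: (has (fun r => `[< same1 x r >]) (dedup l)).
  move: yin; rewrite in_cons => /orP [/eqP Hy | yl]; last by apply: IH; exists y.
  subst y; have /hasP [r rd /asboolP xr] := Hh.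
  by apply: IH; exists r; [exact: dedup_sub | exact: same1_trans sy xr].
rewrite big_cons; have [sx|nsx] := pselect (same1 s x).
  rewrite indT // mul1r (ph_ext (same1_sym sx)) big1_seq ?addr0 //.
  move=> r /andP [_ rd]; rewrite indF ?mul0r // => sr.
  move: Hh => /negbT /hasPn /(_ r rd); rewrite asboolT //.
  exact: same1_trans (same1_sym sx) sr.
rewrite indF // mul0r add0r; apply: IH.
by move: yin; rewrite in_cons => /orP [/eqP Hy | yl]; [subst y|exists y].
Qed.

Lemma pick_self l s : s \in l -> \sum_(r <- dedup l) ind (same1 s r) * ph r = ph s.
Proof. by move=> sl; apply: sum_dedup_pick; exists s. Qed.

Lemma pairing1_regroup (c : chain1 X) R : (forall e, e \in c -> e.2 \in R) ->
  \sum_(e <- c) e.1 * ph e.2 = \sum_(s <- dedup R) Defs.coef1 c s * ph s.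
Proof.
move=> cR; rewrite /Defs.coef1; under [RHS]eq_bigr => s _ do rewrite mulr_suml.
rewrite exchange_big /=; apply: eq_big_seq => e ec.
rewrite -(pick_self (cR e ec)) mulr_sumr.
by apply: eq_bigr => s _; rewrite mulrA.
Qed.

Lemma pairing2_regroup (d : chain2 X) R :
  (forall e, e \in d -> [/\ face0 e.2 \in R, face1 e.2 \in R & face2 e.2 \in R]) ->
  \sum_(e <- d) e.1 * (ph (face0 e.2) - ph (face1 e.2) + ph (face2 e.2))
    = \sum_(s <- dedup R) bd2_coef d s * ph s.
Proof.
move=> dR; rewrite /bd2_coef; under [RHS]eq_bigr => s _ do rewrite mulr_suml.
rewrite exchange_big /=; apply: eq_big_seq => e ed; have [i0 i1 i2] := dR e ed.
rewrite -(pick_self i0) -(pick_self i1) -(pick_self i2) -sumrB -big_split /=.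
by rewrite mulr_sumr; apply: eq_bigr => s _; ring.
Qed.

Lemma pairing_boundary (c : chain1 X) (d : chain2 X) :
  (forall e, e \in c -> sing1 e.2) -> (forall e, e \in d -> sing2 e.2) ->
  (forall s, sing1 s -> Defs.coef1 c s = bd2_coef d s) ->
  \sum_(e <- c) e.1 * ph e.2 =
  \sum_(e <- d) e.1 * (ph (face0 e.2) - ph (face1 e.2) + ph (face2 e.2)).
Proof.
move=> sc sd cd.
pose R := [seq e.2 | e <- c] ++ flatten [seq [:: face0 e.2; face1 e.2; face2 e.2] | e <- d].
have inRd e : e \in d -> [/\ face0 e.2 \in R, face1 e.2 \in R & face2 e.2 \in R].
  move=> ed; rewrite !mem_cat; split; apply/orP; right; apply/flattenP;
    exists [:: face0 e.2; face1 e.2; face2 e.2];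
    (try by apply/mapP; exists e); by rewrite !inE eqxx ?orbT.
have singR s : s \in dedup R -> sing1 s.
  move=> /dedup_sub; rewrite mem_cat => /orP [/mapP [e ec ->]|].
    exact: sc.
  move=> /flattenP [l /mapP [e ed ->]]; have [h0 h1 h2] := face_sing (sd e ed).
  by rewrite !inE => /orP [/eqP ->|/orP [/eqP ->|/eqP ->]].
rewrite (@pairing1_regroup _ R) => [|e ec]; last by rewrite mem_cat map_f.
rewrite (pairing2_regroup inRd); apply: eq_big_seq => s sR.
by rewrite cd //; apply: singR.
Qed.

End Pairing.

Section Separation.
Variables (X : topologicalType) (K A B : set X).
Hypothesis cK : closed K.
Hypothesis bdK_AB : forall x, K x -> ~ K° x -> A x \/ B x.
Hypothesis cA : closed A.
Hypothesis cB : closed B.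
Hypothesis disjAB : forall x, A x -> B x -> False.
Hypothesis H1X : H1_trivial X.

Local Notation crossing := (crossing K A B).
Local Notation labelA := (labelA K A).
Local Notation labelB := (labelB K B).

(** For paths sx : x0 ~> x, sy : x0 ~> y and tau : x ~> y, the 1-chain
    sx + tau - sy is a cycle, hence a boundary; so crossing numbers add up. *)
Lemma crossing_triangle (x0 x y : X) (sx sy tau : RR -> X) :
  sing1 sx -> sing1 sy -> sing1 tau ->
  sx 0 = x0 -> sx 1 = x -> sy 0 = x0 -> sy 1 = y -> tau 0 = x -> tau 1 = y ->
  crossing sy = crossing sx + crossing tau.
Proof.
move=> csx csy ctau sx0 sx1 sy0 sy1 t0 t1.
pose c : chain1 X := [:: (1, sx); (1, tau); (-1, sy)].
have sc e : e \in c -> sing1 e.2.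
  by rewrite !inE => /orP [/eqP ->|/orP [/eqP ->|/eqP ->]].
have cyc : is_cycle1 c.
  move=> z; rewrite /bd1_coef !big_cons big_nil /=.
  change (1 * (ind (sx 1 = z) - ind (sx 0 = z)) + (1 * (ind (tau 1 = z) -
    ind (tau 0 = z)) + (-1 * (ind (sy 1 = z) - ind (sy 0 = z)) + 0)) = 0).
  by rewrite sx0 sx1 sy0 sy1 t0 t1; ring.
have [d [sd cd]] := H1X sc cyc.
have := pairing_boundary (@crossing_ext _ K A B) sc sd cd.
rewrite [X in _ = X]big1_seq => [|e /andP [_ ed]]; last first.
  by rewrite (crossing_simplex_boundary cK bdK_AB cA cB disjAB (sd e ed)) mulr0.
by rewrite !big_cons big_nil /= !mul1r mulN1r addr0 => E; rewrite -[LHS]addr0 -E; ring.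
Qed.

(** Fix paths from a base point a to every point; the crossing number of the
    path to x is a potential whose increments are those of the labels. *)
Hypothesis lpcX : locally_path_connected X.
Variables (a : X) (base_path : X -> RR -> X).
Hypothesis base_pathP : forall x, is_path_in setT (base_path x) a x.

Definition potential x := crossing (base_path x).

Lemma potential_increment x y tau : sing1 tau -> tau 0 = x -> tau 1 = y ->
  potential y = potential x + crossing tau.
Proof.
move=> ct t0 t1; have [cx x0 x1 _] := is_path_inP (base_pathP x).
have [cy y0 y1 _] := is_path_inP (base_pathP y).
exact: crossing_triangle cx cy ct x0 x1 y0 y1 t0 t1.
Qed.

Lemma potential_local (Z : set X) (L : X -> int) : closed Z ->
  (forall s, sing1 s -> s @` I01 `<=` ~` Z -> crossing s = L (s 1) - L (s 0)) ->
  forall x, ~ Z x -> exists2 W, open W /\ W x &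
    W `<=` ~` Z /\ forall y, W y -> potential y - L y = potential x - L x.
Proof.
move=> cZ crossL x nZx.
have [W [oW Wx WZ pW]] := lpcX (closed_openC cZ) nZx.
exists W => //; split => // y Wy; have [tau] := pW x y Wx Wy.
move=> /is_path_inP [ct t0 t1 sub].
rewrite (potential_increment ct t0 t1) crossL //; last by move=> z /sub /WZ.
by rewrite t0 t1; ring.
Qed.

(** The potential corrected by labelB on B and by labelA elsewhere; [c] is the
    offset between the two labels on the region where neither A nor B is met. *)
Definition corrected_potential (c : int) x :=
  if `[< B x >] then potential x - labelB x + c else potential x - labelA x.

Lemma corrected_potential_constant (c : int) S : connected S ->
  (forall y, S y -> ~ A y -> ~ B y -> labelB y - labelA y = c) ->
  forall x y, S x -> S y -> corrected_potential c x = corrected_potential c y.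
Proof.
move=> cS offset; apply: locally_constant_connected cS _ => x Sx.
have [Bx|nBx] := pselect (B x).
  have nAx : ~ A x by move=> /disjAB; apply.
  have [W oWx [WA HW]] := potential_local cA (crossingB cK bdK_AB) nAx.
  exists W => // y Sy Wy; rewrite /corrected_potential (asboolT Bx).
  have [By|nBy] := pselect (B y); first by rewrite (asboolT By) HW.
  by rewrite (asboolF nBy) -(offset y Sy (WA y Wy) nBy) -(HW y Wy); ring.
have [W oWx [WB HW]] := potential_local cB (crossingA cK bdK_AB) nBx.
exists W => // y Sy Wy.
by rewrite /corrected_potential (asboolF nBx) (asboolF (WB y Wy)) HW.
Qed.

(** Compare a in A with b in B along the connected sets K and the closure of
    its complement: the two offsets 4 and 0 would have to agree. *)
Lemma separation_absurd (b : X) : connected K -> connected (~` K) ->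
  A a -> K a -> ~ K° a -> B b -> K b -> ~ K° b -> False.
Proof.
move=> cnK cnC Aa Ka nIa Bb Kb nIb; have nBa : ~ B a by move/(disjAB Aa).
have offK y : K y -> ~ A y -> ~ B y -> labelB y - labelA y = 4.
  by move=> Ky nAy nBy; rewrite /labelA /labelB asboolT // !asboolF.
have offI y : (~` K°) y -> ~ A y -> ~ B y -> labelB y - labelA y = 0.
  move=> nIy nAy nBy; have nKy : ~ K y by move=> Ky; case: (bdK_AB Ky nIy).
  by rewrite /labelA /labelB asboolF.
have cnI : connected (~` K°) by rewrite -closure_setC; exact: connected_closure.
have := corrected_potential_constant cnI offI nIa nIb.
have := corrected_potential_constant cnK offK Ka Kb.
by rewrite /corrected_potential (asboolF nBa) (asboolT Bb) => -> /addrI.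
Qed.

End Separation.

(** If the boundary of K had a nonempty relatively clopen part C other than
    the whole boundary, then C and the rest of the boundary would be a
    separation contradicting [separation_absurd]. *)
Theorem lemmaA1 (X : topologicalType) (K : set X) :
  path_connected_space X -> locally_path_connected X -> H1_trivial X ->
  closed K -> connected K -> connected (~` K) ->
  connected (boundary K).
Proof.
move=> pcX lpcX H1X cK cnK cnC C [a Ca] [U oU CU] [F cF CF].
apply: contrapT => CnE; pose B := boundary K `&` ~` U.
have bdE := boundary_closedE cK.
have Cbd x : C x -> boundary K x by rewrite CU => -[].
have [b [bdb nUb]] : exists b, B b.
  apply: contrapT => nB; apply/CnE/seteqP; split => [//|x bdx]; rewrite CU.
  by split=> //; apply: contrapT => nUx; apply: nB; exists x.
have split_bd x : K x -> ~ K° x -> C x \/ B x.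
  move=> Kx nIx; have bdx : boundary K x by rewrite bdE.
  by have [Ux|nUx] := pselect (U x); [left; rewrite CU|right].
have disjCB x : C x -> B x -> False by rewrite CU => -[_ Ux] [_ /(_ Ux)].
have cC : closed C by rewrite CF; apply: closedI => //; exact: boundary_closed.
have cB : closed B by apply: closedI; [exact: boundary_closed|exact: open_closedC].
have [base_path base_pathP] : {f : X -> RR -> X & forall x, is_path_in setT (f x) a x}.
  by apply: (@choice X (RR -> X) (fun x f => is_path_in setT f a x)) => x; exact: pcX.
have [Ka nIa] : (K `\` K°) a by rewrite -bdE; exact: Cbd.
have [Kb nIb] : (K `\` K°) b by rewrite -bdE.
exact: (separation_absurd cK split_bd cC cB disjCB H1X lpcX base_pathP (b := b)
  cnK cnC Ca Ka nIa (conj bdb nUb) Kb nIb).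
Qed.
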